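(* Let $U=(\mathcal{L}_1\otimes\mathcal{L}_2)\,\Omega\,(\mathcal{R}_1\otimes\mathcal{R}_2)$ be a two-qubit unitary, where $\mathcal{L}_i,\mathcal{R}_i$ are single-qubit unitaries and $$\Omega = e^{-i(\alpha_1\hat\sigma_1\otimes\hat\sigma_1+\alpha_2\hat\sigma_2\otimes\hat\sigma_2+\alpha_3\hat\sigma_3\otimes\hat\sigma_3)}$$ with $\hat\sigma_i$ the Pauli matrices. Let $c_i=\cos(4\alpha_i)$ and suppose $$\frac{3-c_1(c_2+c_3)-c_2c_3}{4}=0.$$ Then for every two-qubit density operator $\rho^{SE}$, with $\rho^S=\operatorname{Tr}_E\rho^{SE}$, there exists a single-qubit density operator $\zeta^E$ such that $\operatorname{Tr}_E(U\rho^{SE}U^\dagger)=\operatorname{Tr}_E(U(\rho^S\otimes\zeta^E)U^\dagger)$, i.e. the system dynamics can be $U$-generated by a product state.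
   Context: The quantity $\frac{3-c_1(c_2+c_3)-c_2c_3}{4}$ is the normalized entangling power of $U$. ''$U$-generated by a product state'' means existence of a valid environment state $\zeta^E$ with the displayed equality. *)

From HB Require Import structures.
From mathcomp Require Import all_boot all_order all_algebra.
From mathcomp Require Import all_classical all_reals all_analysis.
From mathcomp Require Import complex mxtens.
Import Order.TTheory GRing.Theory Num.Theory.
Import numFieldNormedType.Exports.

Set Implicit Arguments.
Unset Strict Implicit.
Unset Printing Implicit Defensive.

Local Open Scope ring_scope.
Local Open Scope complex_scope.
Local Open Scope classical_set_scope.

Section QDefs.
Variable R : realType.
Local Notation C := (R[i]).

Definition dag {m n : nat} (A : 'M[C]_(m, n)) : 'M[C]_(n, m) :=
  map_mx conjc A^T.

Definition unitary {n : nat} (U : 'M[C]_n) : Prop := U *m dag U = 1%:M.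

Definition density {n : nat} (rho : 'M[C]_n) : Prop :=
  [/\ dag rho = rho,
      (forall v : 'cV[C]_n, 0 <= (dag v *m rho *m v) 0 0)
    & \tr rho = 1].

Definition expm {n : nat} (A : 'M[C]_n) : 'M[C]_n :=
  \matrix_(i, j)
    (limn (fun m : nat => ((\sum_(k < m) (k`!%:R)^-1 *: A ^+ k) i j : C^o)) : C).

(* partial trace over the second (environment) tensor factor, for the
   Kronecker product convention (A *t B) (i,j) (k,l) = A i k * B j l *)
Definition ptraceE {m n : nat} (M : 'M[C]_(m * n)) : 'M[C]_m :=
  \matrix_(i, j) \sum_(k < n) M (mxtens_index (i, k)) (mxtens_index (j, k)).

Definition sigma1 : 'M[C]_2 := \matrix_(i, j) (if i == j then 0 else 1).
Definition sigma2 : 'M[C]_2 :=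
  \matrix_(i, j) (if i == j then 0 else if i == 0 then - 'i else 'i).
Definition sigma3 : 'M[C]_2 :=
  \matrix_(i, j) (if i == j then (if i == 0 then 1 else -1) else 0).

Definition Omega (a1 a2 a3 : R) : 'M[C]_(2 * 2) :=
  expm (- 'i *: (a1%:C *: (sigma1 *t sigma1) + a2%:C *: (sigma2 *t sigma2)
                 + a3%:C *: (sigma3 *t sigma3))).

End QDefs.

From HB Require Import structures.
From mathcomp Require Import all_boot all_order all_algebra.
From mathcomp Require Import all_classical all_reals all_analysis.
From mathcomp Require Import complex mxtens.
From mathcomp Require Import ring lra.
Import Order.TTheory GRing.Theory Num.Theory.
Import numFieldNormedType.Exports.

(* Vanishing entangling power forces cos 4a1 = cos 4a2 = cos 4a3 = +-1.  In the
   Bell basis Omega is diagonal with eigenvalues exp(i theta_j), and this condition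
   makes all differences theta_j - theta_0 multiples of pi: Omega is a phase times
   a sign vector, i.e. a phase times sigma_k (x) sigma_k, possibly composed with the
   swap.  So U = (A (x) B) or U = (A (x) B) SWAP with A, B unitary.  In the first case
   Tr_E (U rho U^+) = A rho^S A^+ only depends on rho^S, in the second it equals
   A rho^E A^+; either way zeta = rho^E = Tr_S rho reproduces the reduced dynamics. *)

Set Implicit Arguments.
Unset Strict Implicit.
Unset Printing Implicit Defensive.

Local Open Scope ring_scope.
Local Open Scope complex_scope.
Local Open Scope classical_set_scope.

Section TwoQubits.
Variable R : realType.
Local Notation C := (R[i]).

Lemma normc_real (x : R) : `|x%:C| = `|x|%:C :> C.
Proof. by rewrite normc_def /= expr0n /= addr0 sqrtr_sqr. Qed.

Lemma dagM m n p (A : 'M[C]_(m, n)) (B : 'M[C]_(n, p)) :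
  dag (A *m B) = dag B *m dag A.
Proof. by rewrite /dag trmx_mul map_mxM. Qed.

Lemma dag_tens m n p q (A : 'M[C]_(m, n)) (B : 'M[C]_(p, q)) :
  dag (A *t B) = dag A *t dag B.
Proof. by rewrite /dag trmx_tens map_mxT. Qed.

Lemma dagZ m n k (A : 'M[C]_(m, n)) : dag (k *: A) = k^* *: dag A.
Proof. by apply/matrixP => i j; rewrite !mxE rmorphM. Qed.

Lemma dag1 n : dag (1%:M : 'M[C]_n) = 1%:M.
Proof. by rewrite /dag trmx1 map_mx1. Qed.

Lemma tensmx11 m n : (1%:M : 'M[C]_m) *t (1%:M : 'M[C]_n) = 1%:M.
Proof.
apply/matrixP => a b.
case: (mxtens_indexP a) => i k; case: (mxtens_indexP b) => j l.
rewrite tensmxE !mxE (inj_eq (can_inj (@mxtens_indexK m n))) xpair_eqE.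
by case: (i == j); case: (k == l); rewrite /= ?mulr1 ?mulr0.
Qed.

Lemma tensmxZl m n p q k (A : 'M[C]_(m, n)) (B : 'M[C]_(p, q)) :
  (k *: A) *t B = k *: (A *t B).
Proof. by apply/matrixP => i j; rewrite !mxE mulrA. Qed.

Lemma unitary_mul_dag n (U : 'M[C]_n) : unitary U -> dag U *m U = 1%:M.
Proof. exact: mulmx1C. Qed.

Lemma unitary1 n : unitary (1%:M : 'M[C]_n).
Proof. by rewrite /unitary dag1 mulmx1. Qed.

Lemma unitaryM n (A B : 'M[C]_n) : unitary A -> unitary B -> unitary (A *m B).
Proof.
by rewrite /unitary dagM mulmxA -(mulmxA A) => uA ->; rewrite mulmx1.
Qed.

Lemma unitaryZ n k (A : 'M[C]_n) : k * k^* = 1 -> unitary A -> unitary (k *: A).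
Proof.
by rewrite /unitary dagZ -scalemxAl -scalemxAr scalerA => -> ->; rewrite scale1r.
Qed.

Lemma unitary_tens m n (A : 'M[C]_m) (B : 'M[C]_n) :
  unitary A -> unitary B -> unitary (A *t B).
Proof. by rewrite /unitary dag_tens tensmx_mul => -> ->; rewrite tensmx11. Qed.

(** * Partial traces *)

Definition ptraceS {m n : nat} (M : 'M[C]_(m * n)) : 'M[C]_n :=
  \matrix_(i, j) \sum_(k < m) M (mxtens_index (k, i)) (mxtens_index (k, j)).

Lemma sum_mxtens_index m n (F : 'I_(m * n) -> C) :
  \sum_k F k = \sum_(i < m) \sum_(j < n) F (mxtens_index (i, j)).
Proof.
rewrite pair_big /= (reindex (@mxtens_index m n)) /=.
  by apply: eq_bigr => -[i j].
by exists (@mxtens_unindex m n) => x _; rewrite (mxtens_indexK, mxtens_unindexK).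
Qed.

Lemma sum_eq_natr_mul n (k : 'I_n) (F : 'I_n -> C) :
  \sum_b ((b == k)%:R * F b) = F k.
Proof.
rewrite (bigD1 k) //= eqxx mul1r big1 ?addr0 // => b /negPf ->.
by rewrite mul0r.
Qed.

Lemma ptraceE_trmx m n (Z : 'M[C]_(m * n)) : ptraceE Z^T = (ptraceE Z)^T.
Proof. by apply/matrixP => i j; rewrite !mxE; apply: eq_bigr => k _; rewrite mxE. Qed.

Lemma ptraceE_tens1_mull m n (A : 'M[C]_m) (Z : 'M[C]_(m * n)) :
  ptraceE ((A *t (1%:M : 'M[C]_n)) *m Z) = A *m ptraceE Z.
Proof.
apply/matrixP => i j; rewrite !mxE.
under eq_bigr do rewrite mxE sum_mxtens_index.
under eq_bigr do under eq_bigr do under eq_bigr do rewrite tensmxE mxE.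
rewrite exchange_big /=; apply: eq_bigr => a _.
rewrite mxE mulr_sumr; apply: eq_bigr => k _.
under eq_bigr do rewrite -mulrA eq_sym.
by rewrite -mulr_sumr sum_eq_natr_mul.
Qed.

Lemma ptraceE_tens1_mulr m n (A : 'M[C]_m) (Z : 'M[C]_(m * n)) :
  ptraceE (Z *m (A *t (1%:M : 'M[C]_n))) = ptraceE Z *m A.
Proof.
apply: trmx_inj; rewrite -ptraceE_trmx !trmx_mul trmx_tens trmx1.
by rewrite ptraceE_tens1_mull ptraceE_trmx.
Qed.

Lemma ptraceE_1tens_mulC m n (B : 'M[C]_n) (Z : 'M[C]_(m * n)) :
  ptraceE (((1%:M : 'M[C]_m) *t B) *m Z) = ptraceE (Z *m ((1%:M : 'M[C]_m) *t B)).
Proof.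
apply/matrixP => i j; rewrite !mxE.
under eq_bigr do rewrite mxE sum_mxtens_index.
under eq_bigr do under eq_bigr do under eq_bigr do rewrite tensmxE mxE.
under [RHS]eq_bigr do rewrite mxE sum_mxtens_index.
under [RHS]eq_bigr do under eq_bigr do under eq_bigr do rewrite tensmxE mxE.
under eq_bigr do under eq_bigr do under eq_bigr do rewrite -mulrA eq_sym.
under eq_bigr do under eq_bigr do rewrite -mulr_sumr.
under eq_bigr do rewrite sum_eq_natr_mul.
under [RHS]eq_bigr do under eq_bigr do under eq_bigr do rewrite mulrCA.
under [RHS]eq_bigr do under eq_bigr do rewrite -mulr_sumr.
under [RHS]eq_bigr do rewrite sum_eq_natr_mul.
rewrite exchange_big /=; apply: eq_bigr => k _; apply: eq_bigr => b _.
by rewrite mulrC.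
Qed.

Lemma ptraceE_conj_tens m n (A : 'M[C]_m) (B : 'M[C]_n) (Z : 'M[C]_(m * n)) :
  unitary B -> ptraceE ((A *t B) *m Z *m dag (A *t B)) = A *m ptraceE Z *m dag A.
Proof.
move=> /unitary_mul_dag uB; rewrite dag_tens tensmx_decr [dag A *t _]tensmx_decl.
rewrite !mulmxA ptraceE_tens1_mulr -!mulmxA ptraceE_tens1_mull ptraceE_1tens_mulC.
by rewrite -!mulmxA tensmx_mul mul1mx uB tensmx11 mulmx1 mulmxA.
Qed.

Lemma ptraceE_tens m n (A : 'M[C]_m) (B : 'M[C]_n) : ptraceE (A *t B) = \tr B *: A.
Proof.
apply/matrixP => i j; rewrite !mxE /mxtrace mulr_suml; apply: eq_bigr => k _.
by rewrite tensmxE mulrC.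
Qed.

Lemma ptraceS_tens m n (A : 'M[C]_m) (B : 'M[C]_n) : ptraceS (A *t B) = \tr A *: B.
Proof.
apply/matrixP => i j; rewrite !mxE /mxtrace mulr_suml; apply: eq_bigr => k _.
by rewrite tensmxE.
Qed.

Lemma mxtrace_ptraceE m n (Z : 'M[C]_(m * n)) : \tr (ptraceE Z) = \tr Z.
Proof. by rewrite /mxtrace sum_mxtens_index; apply: eq_bigr => i _; rewrite mxE. Qed.

Lemma mxtrace_ptraceS m n (Z : 'M[C]_(m * n)) : \tr (ptraceS Z) = \tr Z.
Proof.
rewrite /mxtrace sum_mxtens_index exchange_big.
by apply: eq_bigr => i _; rewrite mxE.
Qed.

Definition swapmx n : 'M[C]_(n * n) :=
  \matrix_(a, b) (((mxtens_unindex b).2 == (mxtens_unindex a).1)%:R *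
                  ((mxtens_unindex b).1 == (mxtens_unindex a).2)%:R).

Lemma swapmx_mulE n m (M : 'M[C]_(n * n, m)) (i k : 'I_n) b :
  (swapmx n *m M) (mxtens_index (i, k)) b = M (mxtens_index (k, i)) b.
Proof.
rewrite mxE sum_mxtens_index.
under eq_bigr do under eq_bigr do rewrite mxE !mxtens_indexK /= -mulrA.
under eq_bigr do rewrite sum_eq_natr_mul.
by rewrite sum_eq_natr_mul.
Qed.

Lemma mulmx_swapmxE n m (M : 'M[C]_(m, n * n)) a (j l : 'I_n) :
  (M *m swapmx n) a (mxtens_index (j, l)) = M a (mxtens_index (l, j)).
Proof.
rewrite mxE sum_mxtens_index.
under eq_bigr do under eq_bigr do
  rewrite mxE !mxtens_indexK /= mulrC -mulrA mulrCA (eq_sym l) (eq_sym j).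
under eq_bigr do rewrite sum_eq_natr_mul.
by rewrite sum_eq_natr_mul.
Qed.

Lemma dag_swapmx n : dag (swapmx n) = swapmx n.
Proof.
apply/matrixP => a b; rewrite !mxE rmorphM !rmorph_nat mulrC.
by congr (_ * _); rewrite eq_sym.
Qed.

Lemma swapmx_tens n (A B : 'M[C]_n) : swapmx n *m (A *t B) = (B *t A) *m swapmx n.
Proof.
apply/matrixP => a b.
case: (mxtens_indexP a) => i k; case: (mxtens_indexP b) => j l.
by rewrite swapmx_mulE mulmx_swapmxE !tensmxE mulrC.
Qed.

Lemma ptraceE_conj_swapmx n (Z : 'M[C]_(n * n)) :
  ptraceE (swapmx n *m Z *m swapmx n) = ptraceS Z.
Proof.
apply/matrixP => i j; rewrite !mxE; apply: eq_bigr => k _.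
by rewrite mulmx_swapmxE swapmx_mulE.
Qed.

Definition tens_embed {m} n (k : 'I_m) : 'M[C]_(m * n, n) :=
  \matrix_(a, i) (a == mxtens_index (k, i))%:R.

Lemma ptraceS_kraus m n (Z : 'M[C]_(m * n)) :
  ptraceS Z = \sum_k dag (tens_embed n k) *m Z *m tens_embed n k.
Proof.
apply/matrixP => i j; rewrite !mxE summxE; apply: eq_bigr => k _.
rewrite mxE; under eq_bigr do rewrite [tens_embed _ _ _ _]mxE mulrC.
rewrite sum_eq_natr_mul mxE.
under eq_bigr do rewrite !mxE rmorph_nat.
by rewrite sum_eq_natr_mul.
Qed.

Lemma dag_ptraceS m n (Z : 'M[C]_(m * n)) : dag (ptraceS Z) = ptraceS (dag Z).
Proof.
apply/matrixP => i j; rewrite !mxE rmorph_sum; apply: eq_bigr => k _.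
by rewrite !mxE.
Qed.

Lemma density_ptraceS m n (Z : 'M[C]_(m * n)) : density Z -> density (ptraceS Z).
Proof.
case=> hZ psdZ trZ; split; first by rewrite dag_ptraceS hZ.
  move=> v; rewrite ptraceS_kraus mulmx_sumr mulmx_suml summxE.
  apply: sumr_ge0 => k _; rewrite !mulmxA -dagM -!mulmxA mulmxA.
  exact: psdZ.
by rewrite mxtrace_ptraceS.
Qed.

(** * Local unitaries up to the swap *)

Definition local_upto_swap {n} (M : 'M[C]_(n * n)) : Prop :=
  exists A B : 'M[C]_n,
    [/\ unitary A, unitary B & M = A *t B \/ M = (A *t B) *m swapmx n].

Lemma local_upto_swap_tens n (A B : 'M[C]_n) :
  unitary A -> unitary B -> local_upto_swap (A *t B).
Proof. by move=> uA uB; exists A, B; split => //; left. Qed.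

Lemma local_upto_swap_swapmx n : local_upto_swap (swapmx n).
Proof.
exists 1%:M, 1%:M; split; try exact: unitary1.
by right; rewrite tensmx11 mul1mx.
Qed.

Lemma local_upto_swapZ n k (M : 'M[C]_(n * n)) :
  k * k^* = 1 -> local_upto_swap M -> local_upto_swap (k *: M).
Proof.
move=> hk [A [B [uA uB hM]]]; exists (k *: A), B; split=> //; first exact: unitaryZ.
by rewrite tensmxZl -scalemxAl; case: hM => ->; [left | right].
Qed.

Lemma local_upto_swap_mull n (L1 L2 : 'M[C]_n) (M : 'M[C]_(n * n)) :
  unitary L1 -> unitary L2 -> local_upto_swap M ->
  local_upto_swap ((L1 *t L2) *m M).
Proof.
move=> u1 u2 [A [B [uA uB hM]]]; exists (L1 *m A), (L2 *m B).
split; try exact: unitaryM.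
by rewrite -tensmx_mul; case: hM => ->; [left | right; rewrite mulmxA].
Qed.

Lemma local_upto_swap_mulr n (R1 R2 : 'M[C]_n) (M : 'M[C]_(n * n)) :
  unitary R1 -> unitary R2 -> local_upto_swap M ->
  local_upto_swap (M *m (R1 *t R2)).
Proof.
move=> u1 u2 [A [B [uA uB [->|->]]]].
  by rewrite tensmx_mul; apply: local_upto_swap_tens; apply: unitaryM.
exists (A *m R2), (B *m R1); split; try exact: unitaryM.
by right; rewrite -mulmxA swapmx_tens mulmxA tensmx_mul.
Qed.

Lemma ptraceE_conj_local_upto_swap n (U Y : 'M[C]_(n * n)) :
  local_upto_swap U -> \tr Y = 1 ->
  ptraceE (U *m Y *m dag U) = ptraceE (U *m (ptraceE Y *t ptraceS Y) *m dag U).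
Proof.
move=> [A [B [_ uB [->|->]]]] trY.
  by rewrite !ptraceE_conj_tens // ptraceE_tens mxtrace_ptraceS trY scale1r.
have conj_swap Z : ptraceE ((A *t B) *m swapmx n *m Z *m dag ((A *t B) *m swapmx n))
    = A *m ptraceS Z *m dag A.
  rewrite dagM dag_swapmx -ptraceE_conj_swapmx -(ptraceE_conj_tens A _ uB).
  by rewrite !mulmxA.
by rewrite !conj_swap ptraceS_tens mxtrace_ptraceE trY scale1r.
Qed.

(** * The Bell basis *)

Definition vec4 (x0 x1 x2 x3 : R) (j : 'I_(2 * 2)) : R :=
  match val j with 0 => x0 | 1 => x1 | 2 => x2 | _ => x3 end.

(* Columns: the unnormalised Bell vectors |00>+|11>, |00>-|11>, |01>+|10>,
   |01>-|10> in the basis |00>, |01>, |10>, |11> of [mxtens_index]; they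
   diagonalise every [sigma_k *t sigma_k] and the swap. *)
Definition bell : 'M[C]_(2 * 2) :=
  \matrix_(a, j) nth 0 (nth [::] [:: [:: 1; 1; 0; 0]; [:: 0; 0; 1; 1];
                                   [:: 0; 0; 1; -1]; [:: 1; -1; 0; 0]] a) j.

Definition bell_inv : 'M[C]_(2 * 2) := 2^-1 *: bell^T.

Definition bell_diag (f : 'I_(2 * 2) -> C) : 'M[C]_(2 * 2) :=
  bell *m diag_mx (\row_j f j) *m bell_inv.

Ltac mx_entries :=
  apply/matrixP => -[[|[|[|[|?]]]] ?] -[[|[|[|[|?]]]] ?] //.

Lemma trmx_bell_mul : bell^T *m bell = 2%:M.
Proof. by mx_entries; rewrite !mxE !big_ord_recl big_ord0 !mxE /=; ring. Qed.

Lemma bell_inv_mul : bell_inv *m bell = 1%:M.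
Proof. by rewrite -scalemxAl trmx_bell_mul scale_scalar_mx mulVf. Qed.

Lemma bell_mul_inv : bell *m bell_inv = 1%:M.
Proof. exact/mulmx1C/bell_inv_mul. Qed.

Lemma bell_diagE f a b : bell_diag f a b = 2^-1 * \sum_j bell a j * f j * bell b j.
Proof.
rewrite mxE mulr_sumr; apply: eq_bigr => j _.
by rewrite mul_mx_diag !mxE; ring.
Qed.

Lemma bell_diagM f g : bell_diag f *m bell_diag g = bell_diag (fun j => f j * g j).
Proof.
rewrite /bell_diag -!mulmxA (mulmxA bell_inv) bell_inv_mul mul1mx.
rewrite (mulmxA (diag_mx _)) mulmx_diag.
by congr (bell *m (diag_mx _ *m _)); apply/rowP => j; rewrite !mxE.
Qed.

Lemma bell_diag1 : bell_diag (fun=> 1) = 1%:M.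
Proof.
rewrite /bell_diag (_ : \row_j 1 = const_mx 1); last by apply/rowP => j; rewrite !mxE.
by rewrite diag_const_mx mulmx1 bell_mul_inv.
Qed.

Lemma bell_diagX f k : bell_diag f ^+ k = bell_diag (fun j => f j ^+ k).
Proof.
elim: k => [|k IH].
  by under eq_fun do rewrite expr0; rewrite bell_diag1.
by rewrite exprS IH -mulmxE bell_diagM; congr bell_diag; apply/funext => j; rewrite exprS.
Qed.

Lemma bell_diag_sum (I : Type) (r : seq I) (c : I -> C) (F : I -> 'I_(2 * 2) -> C) :
  \sum_(i <- r) c i *: bell_diag (F i) = bell_diag (fun j => \sum_(i <- r) c i * F i j).
Proof.
apply/matrixP => a b; rewrite summxE bell_diagE.
under eq_bigr do rewrite mxE bell_diagE mulrCA mulr_sumr.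
rewrite -mulr_sumr exchange_big /=; congr (_ * _); apply: eq_bigr => j _.
rewrite mulr_sumr mulr_suml; apply: eq_bigr => i _; ring.
Qed.

Lemma bell_diagD f g : bell_diag (fun j => f j + g j) = bell_diag f + bell_diag g.
Proof.
rewrite /bell_diag -mulmxDl -mulmxDr -raddfD /=.
by congr (_ *m diag_mx _ *m _); apply/rowP => j; rewrite !mxE.
Qed.

Lemma bell_diagZ c f : bell_diag (fun j => c * f j) = c *: bell_diag f.
Proof.
rewrite /bell_diag scalemxAl scalemxAr -linearZ /=.
by congr (_ *m diag_mx _ *m _); apply/rowP => j; rewrite !mxE.
Qed.

Definition pauli (k : nat) : 'M[C]_2 :=
  match k with 0 => 1%:M | 1 => sigma1 R | 2 => sigma2 R | _ => sigma3 R end.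

Definition pauli_sign (k : nat) : 'I_(2 * 2) -> R :=
  match k with
  | 0 => vec4 1 1 1 1 | 1 => vec4 1 (-1) 1 (-1)
  | 2 => vec4 (-1) 1 1 (-1) | _ => vec4 1 1 (-1) (-1) end.

Definition swap_sign : 'I_(2 * 2) -> R := vec4 1 1 1 (-1).

Lemma unitary_pauli k : unitary (pauli k).
Proof.
case: k => [|[|[|k]]]; first exact: unitary1.
all: apply/matrixP => -[[|[|?]] ?] -[[|[|?]] ?] //.
all: rewrite !mxE !big_ord_recl big_ord0 !mxE /=.
all: apply/eqP; rewrite eq_complex /=; apply/andP; split; apply/eqP; ring.
Qed.

Lemma bell_diag_pauli k :
  bell_diag (fun j => (pauli_sign k j)%:C) = pauli k *t pauli k.
Proof.
case: k => [|[|[|k]]]; mx_entries.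
all: rewrite bell_diagE !big_ord_recl big_ord0 !mxE /pauli_sign /vec4 /=.
all: apply/eqP; rewrite eq_complex /=; apply/andP; split; apply/eqP; by field.
Qed.

Lemma bell_diag_swap : bell_diag (fun j => (swap_sign j)%:C) = swapmx 2.
Proof.
mx_entries; rewrite bell_diagE !big_ord_recl big_ord0 !mxE /swap_sign /vec4 /=.
all: apply/eqP; rewrite eq_complex /=; apply/andP; split; apply/eqP; by field.
Qed.

Lemma local_upto_swap_bell_diag_pauli_sign k (b : bool) (e : R) : e ^+ 2 = 1 ->
  local_upto_swap
    (bell_diag (fun j => (e * pauli_sign k j * (if b then swap_sign j else 1))%:C)).
Proof.
move=> e2; under eq_fun do rewrite !rmorphM.
rewrite -(bell_diagM (fun j => e%:C * (pauli_sign k j)%:C)) bell_diagZ.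
rewrite bell_diag_pauli -scalemxAl; apply: local_upto_swapZ.
  by rewrite -normCK normc_real -rmorphXn -normrX e2 normr1.
apply: local_upto_swap_mull; try exact: unitary_pauli.
case: b; first by rewrite bell_diag_swap; exact: local_upto_swap_swapmx.
under eq_fun do rewrite rmorph1.
by rewrite bell_diag1 -tensmx11; apply: local_upto_swap_tens; exact: unitary1.
Qed.

(* A sign vector starting with 1 is, up to a global sign, the Bell spectrum of
   some [pauli k *t pauli k], possibly multiplied by that of the swap. *)
Lemma local_upto_swap_bell_diag_sign (v : 'I_(2 * 2) -> R) :
  v ord0 = 1 -> (forall j, v j ^+ 2 = 1) ->
  local_upto_swap (bell_diag (fun j => (v j)%:C)).
Proof.
move=> v0 v2.
have factor k b e : e ^+ 2 = 1 ->
    v =1 (fun j => e * pauli_sign k j * (if b then swap_sign j else 1)) ->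
    local_upto_swap (bell_diag (fun j => (v j)%:C)).
  by move=> e2 /funext ->; exact: local_upto_swap_bell_diag_pauli_sign.
have sign (c : R) : c ^+ 2 = 1 -> c = 1 \/ c = -1.
  by move/eqP; rewrite sqrf_eq1 => /orP[]/eqP; [left | right].
have vE : v =1 vec4 1 (v (inord 1)) (v (inord 2)) (v (inord 3)).
  case=> -[|[|[|[|?]]]] ? //; rewrite /vec4 /= -?v0;
    by apply: (congr1 v); apply/val_inj; rewrite /= ?inordK.
move: (v2 (inord 1)) (v2 (inord 2)) (v2 (inord 3)) vE.
move: (v (inord 1)) (v (inord 2)) (v (inord 3)) => c1 c2 c3.
move=> /sign[]-> /sign[]-> /sign[]-> vE;
  [ apply: (factor 0 false 1) | apply: (factor 0 true 1)
  | apply: (factor 3 true 1)  | apply: (factor 3 false 1)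
  | apply: (factor 1 true 1)  | apply: (factor 1 false 1)
  | apply: (factor 2 false (-1)) | apply: (factor 2 true (-1)) ];
  rewrite ?sqrrN ?expr1n // => -[[|[|[|[|?]]]] ?] //; rewrite vE.
all: unfold pauli_sign, swap_sign, vec4 => /=; ring.
Qed.

(** * The interaction [Omega] *)

Definition Omega_phase (a1 a2 a3 : R) (j : 'I_(2 * 2)) : R :=
  - (a1 * pauli_sign 1 j + a2 * pauli_sign 2 j + a3 * pauli_sign 3 j).

Lemma bell_diag_Omega_generator a1 a2 a3 :
  - 'i *: (a1%:C *: (sigma1 R *t sigma1 R) + a2%:C *: (sigma2 R *t sigma2 R)
           + a3%:C *: (sigma3 R *t sigma3 R))
  = bell_diag (fun j => 'i * (Omega_phase a1 a2 a3 j)%:C).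
Proof.
rewrite -[sigma1 R *t _](bell_diag_pauli 1) -[sigma2 R *t _](bell_diag_pauli 2).
rewrite -[sigma3 R *t _](bell_diag_pauli 3) -!bell_diagZ -!bell_diagD -bell_diagZ.
apply: congr1; apply/funext => j.
by rewrite /Omega_phase rmorphN !rmorphD !rmorphM mulrN mulNr.
Qed.

Lemma cvg_realC (u : nat -> R) (a : R) :
  u @ \oo --> a -> (fun n => (u n)%:C : C^o) @ \oo --> (a%:C : C^o).
Proof.
move=> /cvgrPdist_lt ua; apply/cvgrPdist_lt => e e0.
move: (e0); rewrite ltcE /= => /andP[/eqP Ie Re0].
near=> t.
have : `|a - u t| < complex.Re e by near: t; apply: ua.
by rewrite -(@rmorphB _ _ (real_complex R)) normc_real ltcE /= Ie eqxx.
Unshelve. all: by end_near.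
Qed.

Definition expi (t : R) : C := (cos t)%:C + 'i * (sin t)%:C.

Lemma expi_coeff (t : R) k :
  (k`!%:R)^-1 * ('i * t%:C) ^+ k = (cos_coeff t k)%:C + 'i * (sin_coeff t k)%:C.
Proof.
rewrite /cos_coeff /sin_coeff !(rmorphM, rmorphN, rmorph1, rmorph_nat, fmorphV) /=.
rewrite exprMn; have [m [b ->]] : exists m (b : bool), k = (b + m.*2)%N.
  by exists k./2, (odd k); rewrite odd_double_half.
case: b => /=.
- rewrite oddD odd_double /= add0n half_double !mul0r add0r mul1r.
  rewrite !rmorphXn rmorphN rmorph1 exprD expr1 -mul2n exprM sqr_i.
  ring.
- rewrite add0n odd_double /= half_double.
  rewrite !rmorphXn rmorphN rmorph1 -mul2n exprM sqr_i.
  ring.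
Qed.

Lemma cvg_expi_series (t : R) :
  (fun m => \sum_(k < m) (k`!%:R)^-1 * ('i * t%:C) ^+ k : C^o) @ \oo --> (expi t : C^o).
Proof.
have cvg_cos : series (cos_coeff t) @ \oo --> cos t.
  by rewrite cos.unlock; exact: is_cvg_series_cos_coeff.
have cvg_sin : series (sin_coeff t) @ \oo --> sin t.
  by rewrite sin.unlock; exact: is_cvg_series_sin_coeff.
have -> : (fun m => \sum_(k < m) (k`!%:R)^-1 * ('i * t%:C) ^+ k : C^o) =
    (fun m => ((series (cos_coeff t) m)%:C : C^o) + 'i * (series (sin_coeff t) m)%:C).
  apply/funext => m; under eq_bigr do rewrite expi_coeff.
  by rewrite big_split /= -mulr_sumr /series /= !big_mkord !rmorph_sum.
apply: cvgD; first exact: cvg_realC cvg_cos.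
by apply: cvgMl_tmp; exact: cvg_realC cvg_sin.
Qed.

Lemma expm_bell_diag f g :
  (forall j, (fun m => \sum_(k < m) (k`!%:R)^-1 * f j ^+ k : C^o) @ \oo --> (g j : C^o)) ->
  expm (bell_diag f) = bell_diag g.
Proof.
move=> fg; apply/matrixP => a b; rewrite mxE.
have -> : (fun m => (\sum_(k < m) (k`!%:R)^-1 *: bell_diag f ^+ k) a b : C^o) =
    (fun m => 2^-1 * \sum_j bell a j * (\sum_(k < m) (k`!%:R)^-1 * f j ^+ k) * bell b j).
  apply/funext => m; under eq_bigr do rewrite bell_diagX.
  by rewrite bell_diag_sum bell_diagE.
apply: (@cvg_lim C^o) => //; rewrite bell_diagE.
apply: cvgMl_tmp.
apply: cvg_big => [|j _]; first exact: add_continuous.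
by apply: cvgMr_tmp; apply: cvgMl_tmp; exact: fg.
Qed.

Lemma Omega_bell_diag a1 a2 a3 :
  Omega a1 a2 a3 = bell_diag (fun j => expi (Omega_phase a1 a2 a3 j)).
Proof.
rewrite /Omega bell_diag_Omega_generator.
by apply: expm_bell_diag => j; exact: cvg_expi_series.
Qed.

Lemma expi_mul_conj t : expi t * (expi t)^* = 1.
Proof.
have := cos2Dsin2 t; rewrite /expi => h; apply/eqP; rewrite eq_complex /=.
by apply/andP; split; apply/eqP; nra.
Qed.

Lemma expiD_sin0 t d : sin d = 0 -> expi (t + d) = expi t * (cos d)%:C.
Proof.
move=> sd; rewrite /expi cosD sinD sd !mulr0 subr0 addr0 !rmorphM.
by rewrite mulrDl mulrA.
Qed.

(** * Vanishing entangling power *)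

Lemma eq_of_pair_products_eq3 (x y z : R) :
  -1 <= x <= 1 -> -1 <= y <= 1 -> -1 <= z <= 1 ->
  x * y + x * z + y * z = 3 -> y = x /\ z = x /\ x ^+ 2 = 1.
Proof.
move=> /andP[xl xu] /andP[yl yu] /andP[zl zu] s3.
have sq0 (u v : R) : (u - v) ^+ 2 = 0 -> u = v.
  by move/eqP; rewrite sqrf_eq0 subr_eq0 => /eqP.
have x2 : x ^+ 2 <= 1 by nra.
have y2 : y ^+ 2 <= 1 by nra.
have z2 : z ^+ 2 <= 1 by nra.
have spread : (x - y) ^+ 2 + (y - z) ^+ 2 + (z - x) ^+ 2 <= 0 by nra.
have exy : y = x by apply: sq0; nra.
have exz : z = x by apply: sq0; nra.
by split=> //; split=> //; move: s3; rewrite exy exz; nra.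
Qed.

Lemma entangling_power0_cos4 (a1 a2 a3 : R) :
  (3 - cos (4 * a1) * (cos (4 * a2) + cos (4 * a3))
     - cos (4 * a2) * cos (4 * a3)) / 4 = 0 ->
  cos (4 * a2) = cos (4 * a1) /\ cos (4 * a3) = cos (4 * a1) /\ cos (4 * a1) ^+ 2 = 1.
Proof.
move=> /eqP; rewrite mulf_eq0 invr_eq0 pnatr_eq0 orbF subr_eq0 => /eqP ep0.
have cos_bound t : -1 <= cos t <= 1 by rewrite cos_geN1 cos_le1.
by apply: eq_of_pair_products_eq3 => //; lra.
Qed.

Lemma sin_add2_cos4 (a b : R) :
  cos (4 * b) = cos (4 * a) -> cos (4 * a) ^+ 2 = 1 -> sin (2 * a + 2 * b) = 0.
Proof.
have cos4 x : cos (4 * x) = cos (2 * x) ^+ 2 *+ 2 - 1.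
  by rewrite -cos_mulr2n; congr cos; rewrite mulr2n; ring.
have sin2 x : cos (4 * x) = 1 -> sin (2 * x) = 0.
  by rewrite cos4 => h; apply/eqP; rewrite -sqrf_eq0 sin2cos2; apply/eqP; lra.
have cos2 x : cos (4 * x) = -1 -> cos (2 * x) = 0.
  by rewrite cos4 => h; apply/eqP; rewrite -sqrf_eq0; apply/eqP; lra.
move=> eq4 /eqP; rewrite sqrf_eq1 sinD => /orP[]/eqP e.
  by rewrite !sin2 ?eq4 // mul0r mulr0 addr0.
by rewrite !cos2 ?eq4 // mulr0 mul0r addr0.
Qed.

(* The eigenphases of [Omega] differ by 2 a1 - 2 a2, 2 a3 - 2 a2 and 2 a1 + 2 a3,
   whose sines vanish. *)
Lemma Omega_local_upto_swap (a1 a2 a3 : R) :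
  (3 - cos (4 * a1) * (cos (4 * a2) + cos (4 * a3))
     - cos (4 * a2) * cos (4 * a3)) / 4 = 0 ->
  local_upto_swap (Omega a1 a2 a3).
Proof.
move=> /entangling_power0_cos4 [c2 [c3 c1]].
pose th := Omega_phase a1 a2 a3.
have cosN4 (x : R) : cos (4 * - x) = cos (4 * x) by rewrite mulrN cosN.
have th_diff j :
    th j - th ord0 = vec4 0 (2 * a1 + 2 * - a2) (2 * a3 + 2 * - a2) (2 * a1 + 2 * a3) j.
  by case: j => -[|[|[|[|?]]]] ? //; rewrite /th /Omega_phase /pauli_sign /vec4 /=; ring.
have sin_th j : sin (th j - th ord0) = 0.
  by rewrite th_diff; case: j => -[|[|[|[|?]]]] ? //; rewrite /vec4 /= ?sin0 //;
    apply: sin_add2_cos4; rewrite ?cosN4 ?c2 ?c3.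
have -> : Omega a1 a2 a3 = expi (th ord0) *: bell_diag (fun j => (cos (th j - th ord0))%:C).
  rewrite Omega_bell_diag -bell_diagZ; apply: congr1; apply/funext => j.
  by rewrite -expiD_sin0 // subrKC.
apply: local_upto_swapZ; first exact: expi_mul_conj.
apply: local_upto_swap_bell_diag_sign => [|j]; first by rewrite subrr cos0.
by rewrite cos2sin2 sin_th expr0n /= subr0.
Qed.

End TwoQubits.

Local Close Scope classical_set_scope.

Theorem theorem3 (R : realType) (L1 L2 R1 R2 : 'M[R[i]]_2) (a1 a2 a3 : R) :
  unitary L1 -> unitary L2 -> unitary R1 -> unitary R2 ->
  (3 - cos (4 * a1) * (cos (4 * a2) + cos (4 * a3))
     - cos (4 * a2) * cos (4 * a3)) / 4 = 0 ->
  let U : 'M[R[i]]_(2 * 2) := (L1 *t L2) *m Omega a1 a2 a3 *m (R1 *t R2) in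
  forall rho : 'M[R[i]]_(2 * 2), density rho ->
  exists zeta : 'M[R[i]]_2, density zeta /\
    ptraceE (U *m rho *m dag U) =
    ptraceE (U *m (ptraceE rho *t zeta) *m dag U).
Proof.
move=> uL1 uL2 uR1 uR2 ep0 U rho rho_density.
have U_local : local_upto_swap U.
  apply: local_upto_swap_mulr => //; apply: local_upto_swap_mull => //.
  exact: Omega_local_upto_swap.
exists (ptraceS rho); split; first exact: density_ptraceS.
by apply: ptraceE_conj_local_upto_swap => //; case: rho_density.
Qed.
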